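(* Let $N_1,N_2,\chi>0$, $\alpha=\pi(\sqrt{N_2/\pi}+N_1/2)^2$, $\beta=\alpha/\sqrt{\pi N_2}$, $\tau=\sqrt{\pi N_2}N_1$, $\rho=1+N_2/\tau$, and let $S(\phi)=\frac{\phi}{\tau}\ln\frac{\alpha\phi}{\tau}+\frac{\phi}{N_1}\ln\frac{\beta\phi}{\tau}+(1-\rho\phi)\ln(1-\rho\phi)$, $H(\phi)=\chi\phi(1-\rho\phi)$, $\kappa(\phi)=\frac{1}{36\phi(1-\phi)}$. For grid functions $\phi\in\mathcal{C}_{\rm per}$ with $0<\phi_{i,j}<1/\rho$ for all $i,j$, define $F(\phi)=h^2\sum_{i,j=1}^N\big(S(\phi_{i,j})+H(\phi_{i,j})+\kappa(\phi_{i,j})(a_x((D_x\phi)^2)_{i,j}+a_y((D_y\phi)^2)_{i,j})\big)$, $F_S(\phi)=h^2\sum_{i,j}S(\phi_{i,j})$, $F_H(\phi)=F_e(\phi)=-h^2\sum_{i,j}H(\phi_{i,j})$, $F_{K_1}(\phi)=h^2\sum_{i,j}(\kappa(\phi_{i,j})-\tfrac1{36})(a_x((D_x\phi)^2)_{i,j}+a_y((D_y\phi)^2)_{i,j})$, $F_{K_2}(\phi)=\frac{1}{36}\|\nabla_h\phi\|_2^2$, and $F_c=F_S+F_{K_1}+F_{K_2}$. Then $$F(\phi)=F_c(\phi)-F_e(\phi)=F_S(\phi)+F_{K_1}(\phi)+F_{K_2}(\phi)-F_H(\phi),$$ and each of $F_c,F_e,F_S,F_{K_1},F_{K_2},F_H$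 is convex (on the convex set of grid functions with values in $(0,1/\rho)$).
   Context: Let $\Omega=(0,L)^2$, $N\in\mathbb{N}$, $h=L/N$. $\mathcal{C}_{\rm per}$ is the space of real grid functions $\nu_{i,j}$, $i,j\in\mathbb{Z}$, that are $N$-periodic in each index (values at cell centers $((i-\frac12)h,(j-\frac12)h)$). For $\nu\in\mathcal{C}_{\rm per}$ define on edges $D_x\nu_{i+1/2,j}=(\nu_{i+1,j}-\nu_{i,j})/h$, $D_y\nu_{i,j+1/2}=(\nu_{i,j+1}-\nu_{i,j})/h$, $A_x\nu_{i+1/2,j}=(\nu_{i+1,j}+\nu_{i,j})/2$ (similarly $A_y$); for edge functions $f$ define $a_xf_{i,j}=(f_{i+1/2,j}+f_{i-1/2,j})/2$, $d_xf_{i,j}=(f_{i+1/2,j}-f_{i-1/2,j})/h$ (similarly $a_y,d_y$). $\|\nabla_h\nu\|_2^2=h^2\sum_{i,j=1}^N\big(a_x((D_x\nu)^2)_{i,j}+a_y((D_y\nu)^2)_{i,j}\big)$. *)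

From HB Require Import structures.
From mathcomp Require Import all_boot all_order all_algebra.
From mathcomp Require Import all_classical all_reals all_analysis.
Set Implicit Arguments. Unset Strict Implicit. Unset Printing Implicit Defensive.
Import Order.TTheory GRing.Theory Num.Theory.
Local Open Scope ring_scope.

Section Defs.
Variable R : realType.

(* Grid (cell-centered) functions: nu i j = nu_{i,j}, i j : int.
   Edge functions: f i j = f_{i+1/2, j} (for x-edges), resp. f_{i, j+1/2}. *)
Definition grid := int -> int -> R.

Definition Cper (N : nat) (nu : grid) : Prop :=
  forall i j, nu (i + N%:Z)%R j = nu i j /\ nu i (j + N%:Z)%R = nu i j.

Definition Dx (h : R) (nu : grid) : grid := fun i j => (nu (i + 1)%R j - nu i j) / h.
Definition Dy (h : R) (nu : grid) : grid := fun i j => (nu i (j + 1)%R - nu i j) / h.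
Definition ax (f : grid) : grid := fun i j => (f i j + f (i - 1)%R j) / 2.
Definition ay (f : grid) : grid := fun i j => (f i j + f i (j - 1)%R) / 2.

Definition sq (f : grid) : grid := fun i j => f i j ^+ 2.

Definition gradsq (h : R) (nu : grid) : grid :=
  fun i j => ax (sq (Dx h nu)) i j + ay (sq (Dy h nu)) i j.

Definition gsum (N : nat) (h : R) (g : grid) : R :=
  h ^+ 2 * \sum_(1 <= i < N.+1) \sum_(1 <= j < N.+1) g i%:Z j%:Z.

Definition gradnorm2 (N : nat) (h : R) (nu : grid) : R := gsum N h (gradsq h nu).

Definition alpha (N1 N2 : R) : R := pi * (Num.sqrt (N2 / pi) + N1 / 2) ^+ 2.
Definition beta (N1 N2 : R) : R := alpha N1 N2 / Num.sqrt (pi * N2).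
Definition tau (N1 N2 : R) : R := Num.sqrt (pi * N2) * N1.
Definition rho (N1 N2 : R) : R := 1 + N2 / tau N1 N2.

Definition Sfun (N1 N2 : R) (p : R) : R :=
  p / tau N1 N2 * ln (alpha N1 N2 * p / tau N1 N2)
  + p / N1 * ln (beta N1 N2 * p / tau N1 N2)
  + (1 - rho N1 N2 * p) * ln (1 - rho N1 N2 * p).
Definition Hfun (N1 N2 chi : R) (p : R) : R := chi * p * (1 - rho N1 N2 * p).
Definition kappa (p : R) : R := 1 / (36 * p * (1 - p)).

Definition Fen (N1 N2 chi : R) (N : nat) (h : R) (phi : grid) : R :=
  gsum N h (fun i j => Sfun N1 N2 (phi i j) + Hfun N1 N2 chi (phi i j)
                       + kappa (phi i j) * gradsq h phi i j).
Definition FS (N1 N2 : R) (N : nat) (h : R) (phi : grid) : R :=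
  gsum N h (fun i j => Sfun N1 N2 (phi i j)).
Definition FH (N1 N2 chi : R) (N : nat) (h : R) (phi : grid) : R :=
  - gsum N h (fun i j => Hfun N1 N2 chi (phi i j)).
Definition Fe (N1 N2 chi : R) (N : nat) (h : R) (phi : grid) : R :=
  - gsum N h (fun i j => Hfun N1 N2 chi (phi i j)).
Definition FK1 (N : nat) (h : R) (phi : grid) : R :=
  gsum N h (fun i j => (kappa (phi i j) - 1 / 36) * gradsq h phi i j).
Definition FK2 (N : nat) (h : R) (phi : grid) : R := 1 / 36 * gradnorm2 N h phi.
Definition Fc (N1 N2 : R) (N : nat) (h : R) (phi : grid) : R :=
  FS N1 N2 N h phi + FK1 N h phi + FK2 N h phi.

Definition admissible (N1 N2 : R) (N : nat) (phi : grid) : Prop :=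
  Cper N phi /\ forall i j, 0 < phi i j < 1 / rho N1 N2.

Definition convex_on (D : grid -> Prop) (E : grid -> R) : Prop :=
  forall (phi psi : grid) (t : R), D phi -> D psi -> 0 <= t <= 1 ->
    E (fun i j => t * phi i j + (1 - t) * psi i j) <= t * E phi + (1 - t) * E psi.

End Defs.

From HB Require Import structures.
From mathcomp Require Import all_boot all_order all_algebra.
From mathcomp Require Import all_classical all_reals all_analysis.
From mathcomp Require Import ring lra.
Set Implicit Arguments.
Unset Strict Implicit.
Import Order.TTheory GRing.Theory Num.Theory.
Local Open Scope ring_scope.

(* Every energy is h^2 times a sum of local densities, so convexity is checked
   cell by cell.  The entropy density is a nonnegative combination of
   x ln (c x) composed with affine maps, and -H is a quadratic with leading
   coefficient chi rho >= 0.  The gradient densities have the form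
   g(phi) (D phi)^2 with D linear in phi: for g = 1/36 this is the convexity
   of z^2, and on (0, 1) we have kappa - 1/36 = 1/w with
   w(x) = 36 x (1 - x) / (1 - x + x^2) positive and concave, so convexity
   follows from that of the perspective (w, z) |-> z^2 / w, which is
   nonincreasing in w.  Values in (0, 1/rho) lie in (0, 1) since rho > 1. *)

Section RealConvexity.
Variable R : realType.
Implicit Types (D : R -> Prop) (f w : R -> R) (a b c m t x : R).

Definition convex_in D f := forall a b t, D a -> D b -> 0 <= t <= 1 ->
  f (t * a + (1 - t) * b) <= t * f a + (1 - t) * f b.

Lemma mix_gt0 a b t : 0 < a -> 0 < b -> 0 <= t <= 1 -> 0 < t * a + (1 - t) * b.
Proof. by move=> a0 b0 /andP[t0 t1]; nra. Qed.

Lemma mix_in01 a b t : 0 < a < 1 -> 0 < b < 1 -> 0 <= t <= 1 ->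
  0 < t * a + (1 - t) * b < 1.
Proof.
move=> /andP[a0 a1] /andP[b0 b1] t01.
have := mix_gt0 a0 b0 t01.
have : 0 < t * (1 - a) + (1 - t) * (1 - b) by apply: mix_gt0 => //; lra.
by move=> *; apply/andP; split; lra.
Qed.

Lemma convex_in_supporting_line D f f' :
  (forall a b t, D a -> D b -> 0 <= t <= 1 -> D (t * a + (1 - t) * b)) ->
  (forall a m, D a -> D m -> f m + f' m * (a - m) <= f a) ->
  convex_in D f.
Proof.
move=> Dmix above_tangent a b t Da Db t01; have /andP[t0 t1] := t01.
set m := t * a + (1 - t) * b.
have Dm : D m by exact: Dmix.
have -> : f m = t * (f m + f' m * (a - m)) + (1 - t) * (f m + f' m * (b - m)).
  by rewrite /m; ring.
apply: lerD; apply: ler_wpM2l; rewrite ?subr_ge0 //; exact: above_tangent.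
Qed.

Lemma convex_inD D f1 f2 : convex_in D f1 -> convex_in D f2 ->
  convex_in D (fun x => f1 x + f2 x).
Proof.
move=> cf1 cf2 a b t Da Db t01.
by have := cf1 a b t Da Db t01; have := cf2 a b t Da Db t01; lra.
Qed.

Lemma convex_inZ D f k : 0 <= k -> convex_in D f -> convex_in D (fun x => k * f x).
Proof.
by move=> k0 cf a b t Da Db t01; have := ler_wpM2l k0 (cf a b t Da Db t01); lra.
Qed.

Lemma convex_in_comp_affine D E f c d : convex_in E f ->
  (forall x, D x -> E (c + d * x)) -> convex_in D (fun x => f (c + d * x)).
Proof.
move=> cf DE a b t Da Db t01.
have -> : c + d * (t * a + (1 - t) * b) = t * (c + d * a) + (1 - t) * (c + d * b).
  by ring.
by apply: cf => //; apply: DE.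
Qed.

Lemma ln_le_subr1 x : 0 < x -> ln x <= x - 1.
Proof.
by move=> x0; have := @le_ln1Dx R (x - 1); rewrite addrCA subrr addr0; apply; lra.
Qed.

Lemma convex_in_xlnx c : 0 < c -> convex_in (fun x => 0 < x) (fun x => x * ln (c * x)).
Proof.
move=> c0; apply: (@convex_in_supporting_line _ _ (fun m => ln (c * m) + 1)).
  by move=> a b t; apply: mix_gt0.
move=> a m a0 m0.
have := ler_wpM2l (ltW a0) (ln_le_subr1 (divr_gt0 m0 a0)).
have -> : a * (m / a - 1) = m - a by field; rewrite lt0r_neq0.
by rewrite ln_div ?lnM ?posrE //; lra.
Qed.

Lemma perspective_sqr (w1 w2 z1 z2 t : R) : 0 < w1 -> 0 < w2 -> 0 <= t <= 1 ->
  (t * z1 + (1 - t) * z2) ^+ 2 / (t * w1 + (1 - t) * w2)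
  <= t * (z1 ^+ 2 / w1) + (1 - t) * (z2 ^+ 2 / w2).
Proof.
move=> w1_gt0 w2_gt0 t01; have W_gt0 := mix_gt0 w1_gt0 w2_gt0 t01.
have /andP[t0 t1] := t01.
rewrite -subr_ge0.
have -> : t * (z1 ^+ 2 / w1) + (1 - t) * (z2 ^+ 2 / w2)
          - (t * z1 + (1 - t) * z2) ^+ 2 / (t * w1 + (1 - t) * w2)
        = t * (1 - t) * (z1 * w2 - z2 * w1) ^+ 2 / (w1 * w2 * (t * w1 + (1 - t) * w2)).
  by field; rewrite !lt0r_neq0.
apply: divr_ge0; last by rewrite !mulr_ge0 ?ltW.
by apply: mulr_ge0; [apply: mulr_ge0 => //; lra | exact: sqr_ge0].
Qed.

Definition convex_weight_sqr D (g : R -> R) := forall t x1 x2, D x1 -> D x2 ->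
  0 <= t <= 1 -> forall z1 z2,
  g (t * x1 + (1 - t) * x2) * (t * z1 + (1 - t) * z2) ^+ 2
  <= t * (g x1 * z1 ^+ 2) + (1 - t) * (g x2 * z2 ^+ 2).

Lemma convex_weight_sqr_inv D w : (forall x, D x -> 0 < w x) ->
  convex_in D (fun x => - w x) -> convex_weight_sqr D (fun x => (w x)^-1).
Proof.
move=> w_gt0 w_concave t x1 x2 D1 D2 t01 z1 z2.
have W_gt0 := mix_gt0 (w_gt0 _ D1) (w_gt0 _ D2) t01.
have W_le : t * w x1 + (1 - t) * w x2 <= w (t * x1 + (1 - t) * x2).
  by have := w_concave _ _ _ D1 D2 t01; lra.
rewrite mulrC ![(w _)^-1 * _]mulrC.
apply: le_trans (perspective_sqr z1 z2 (w_gt0 _ D1) (w_gt0 _ D2) t01).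
by apply: ler_wpM2l; [exact: sqr_ge0 | rewrite lef_pV2 ?posrE // (lt_le_trans W_gt0)].
Qed.

Definition kappa_weight x := 36 * x * (1 - x) / (1 - x + x ^+ 2).

Lemma kappa_weight_den_gt0 x : 0 < 1 - x + x ^+ 2.
Proof. by have := sqr_ge0 (x - 1 / 2); nra. Qed.

Lemma kappa_weight_gt0 x : 0 < x < 1 -> 0 < kappa_weight x.
Proof.
move=> /andP[x0 x1]; apply: divr_gt0; last exact: kappa_weight_den_gt0.
by rewrite !mulr_gt0 ?subr_gt0.
Qed.

Lemma kappa_sub_inv x : 0 < x < 1 -> kappa x - 1 / 36 = (kappa_weight x)^-1.
Proof.
move=> /andP[x0 x1]; have := kappa_weight_den_gt0 x.
rewrite /kappa /kappa_weight => den_gt0; field.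
by rewrite !lt0r_neq0 ?subr_gt0.
Qed.

Lemma kappa_weight_concave : convex_in (fun x => 0 < x < 1) (fun x => - kappa_weight x).
Proof.
apply: (@convex_in_supporting_line _ _
  (fun m => - (36 * (1 - 2 * m) / (1 - m + m ^+ 2) ^+ 2))).
  by move=> a b t; apply: mix_in01.
move=> a m /andP[a0 a1] /andP[m0 m1].
have qa := kappa_weight_den_gt0 a; have qm := kappa_weight_den_gt0 m.
rewrite -subr_ge0.
have -> : - kappa_weight a - (- kappa_weight m
            + - (36 * (1 - 2 * m) / (1 - m + m ^+ 2) ^+ 2) * (a - m))
        = 36 * (a - m) ^+ 2 * (m * (1 - m) + m * (1 - a) + a * (1 - m))
          / ((1 - a + a ^+ 2) * (1 - m + m ^+ 2) ^+ 2).
  by rewrite /kappa_weight; field; rewrite !lt0r_neq0.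
apply: divr_ge0; last by rewrite mulr_ge0 ?exprn_ge0 ?ltW.
by apply: mulr_ge0; [rewrite mulr_ge0 ?sqr_ge0 | nra].
Qed.

Lemma convex_weight_sqr_kappa :
  convex_weight_sqr (fun x => 0 < x < 1) (fun x => kappa x - 1 / 36).
Proof.
move=> t x1 x2 D1 D2 t01 z1 z2.
rewrite !kappa_sub_inv ?mix_in01 //.
exact: (convex_weight_sqr_inv kappa_weight_gt0 kappa_weight_concave D1 D2 t01).
Qed.

Lemma convex_weight_sqr_cst D c : 0 < c -> convex_weight_sqr D (fun _ => c^-1).
Proof. by move=> c0; apply: convex_weight_sqr_inv => // a b t _ _ _; lra. Qed.

End RealConvexity.

Section GridEnergies.
Variable R : realType.
Variables (N : nat) (h : R).
Implicit Types (f g phi psi : grid R) (A : grid R -> Prop).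

Lemma eq_gsum f g : (forall i j, f i j = g i j) -> gsum N h f = gsum N h g.
Proof.
by move=> fg; rewrite /gsum; congr (_ * _); apply: eq_bigr => i _; apply: eq_bigr.
Qed.

Lemma ler_gsum f g : (forall i j, f i j <= g i j) -> gsum N h f <= gsum N h g.
Proof.
move=> fg; rewrite /gsum; apply: ler_wpM2l; first exact: sqr_ge0.
by apply: ler_sum => i _; apply: ler_sum.
Qed.

Lemma gsumD f g : gsum N h (fun i j => f i j + g i j) = gsum N h f + gsum N h g.
Proof.
rewrite /gsum -mulrDr -big_split; congr (_ * _).
by apply: eq_bigr => i _; rewrite big_split.
Qed.

Lemma gsumZ k f : gsum N h (fun i j => k * f i j) = k * gsum N h f.
Proof.
rewrite /gsum mulrCA; congr (_ * _).
by rewrite mulr_sumr; apply: eq_bigr => i _; rewrite mulr_sumr.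
Qed.

Lemma gsumN f : gsum N h (fun i j => - f i j) = - gsum N h f.
Proof. by rewrite -mulN1r -gsumZ; apply: eq_gsum => i j; rewrite mulN1r. Qed.

Lemma convex_onD A E1 E2 : convex_on A E1 -> convex_on A E2 ->
  convex_on A (fun phi => E1 phi + E2 phi).
Proof.
move=> cE1 cE2 phi psi t Aphi Apsi t01.
by have := cE1 phi psi t Aphi Apsi t01; have := cE2 phi psi t Aphi Apsi t01; lra.
Qed.

Lemma convex_on_gsum A (F : grid R -> grid R) :
  (forall phi psi t, A phi -> A psi -> 0 <= t <= 1 -> forall i j,
     F (fun i j => t * phi i j + (1 - t) * psi i j) i j
     <= t * F phi i j + (1 - t) * F psi i j) ->
  convex_on A (fun phi => gsum N h (F phi)).
Proof.
move=> F_convex phi psi t Aphi Apsi t01.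
by rewrite -!gsumZ -gsumD; apply: ler_gsum; apply: F_convex.
Qed.

Lemma convex_on_gsum_pointwise A D (f : R -> R) :
  (forall phi, A phi -> forall i j, D (phi i j)) -> convex_in D f ->
  convex_on A (fun phi => gsum N h (fun i j => f (phi i j))).
Proof.
move=> AD cf; apply: (@convex_on_gsum _ (fun phi i j => f (phi i j))).
by move=> phi psi t Aphi Apsi t01 i j; apply: cf t01; apply: AD.
Qed.

Lemma gradsqE phi i j : gradsq h phi i j =
  (Dx h phi i j ^+ 2 + Dx h phi (i - 1) j ^+ 2
   + Dy h phi i j ^+ 2 + Dy h phi i (j - 1) ^+ 2) / 2.
Proof. by rewrite /gradsq /ax /ay /sq; ring. Qed.

Lemma Dx_mix phi psi t i j :
  Dx h (fun i j => t * phi i j + (1 - t) * psi i j) i j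
  = t * Dx h phi i j + (1 - t) * Dx h psi i j.
Proof. by rewrite /Dx; ring. Qed.

Lemma Dy_mix phi psi t i j :
  Dy h (fun i j => t * phi i j + (1 - t) * psi i j) i j
  = t * Dy h phi i j + (1 - t) * Dy h psi i j.
Proof. by rewrite /Dy; ring. Qed.

Lemma convex_on_gsum_weight_gradsq A D (g : R -> R) :
  (forall phi, A phi -> forall i j, D (phi i j)) -> convex_weight_sqr D g ->
  convex_on A (fun phi => gsum N h (fun i j => g (phi i j) * gradsq h phi i j)).
Proof.
move=> AD cg.
apply: (@convex_on_gsum _ (fun phi i j => g (phi i j) * gradsq h phi i j)).
move=> phi psi t Aphi Apsi t01 i j /=.
have c := cg t _ _ (AD _ Aphi i j) (AD _ Apsi i j) t01.
rewrite !gradsqE !Dx_mix !Dy_mix.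
have := c (Dx h phi i j) (Dx h psi i j).
have := c (Dx h phi (i - 1) j) (Dx h psi (i - 1) j).
have := c (Dy h phi i j) (Dy h psi i j).
have := c (Dy h phi i (j - 1)) (Dy h psi i (j - 1)).
lra.
Qed.

End GridEnergies.

Section FloryHuggins.
Variable R : realType.
Variables (N1 N2 : R).
Hypotheses (N1_gt0 : 0 < N1) (N2_gt0 : 0 < N2).

Lemma tau_gt0 : 0 < tau N1 N2.
Proof. by rewrite mulr_gt0 // sqrtr_gt0 mulr_gt0 ?pi_gt0. Qed.

Lemma alpha_gt0 : 0 < alpha N1 N2.
Proof.
rewrite mulr_gt0 ?pi_gt0 // exprn_gt0 // ltr_wpDl ?sqrtr_ge0 //.
by rewrite divr_gt0.
Qed.

Lemma beta_gt0 : 0 < beta N1 N2.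
Proof. by rewrite divr_gt0 ?alpha_gt0 // sqrtr_gt0 mulr_gt0 ?pi_gt0. Qed.

Lemma rho_gt1 : 1 < rho N1 N2.
Proof. by rewrite /rho ltrDl divr_gt0 ?tau_gt0. Qed.

Lemma rho_gt0 : 0 < rho N1 N2.
Proof. exact: lt_trans ltr01 rho_gt1. Qed.

Lemma lt_inv_rho_in01 x : 0 < x < 1 / rho N1 N2 -> 0 < x < 1.
Proof.
move=> /andP[x0 x1]; rewrite x0 (lt_le_trans x1) //.
by rewrite ler_pdivrMr ?rho_gt0 // mul1r ltW // rho_gt1.
Qed.

Lemma Sfun_convex : convex_in (fun x => 0 < x < 1 / rho N1 N2) (Sfun N1 N2).
Proof.
have -> : Sfun N1 N2 = fun p =>
    1 / tau N1 N2 * (p * ln (alpha N1 N2 / tau N1 N2 * p))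
    + 1 / N1 * (p * ln (beta N1 N2 / tau N1 N2 * p))
    + (1 + - rho N1 N2 * p) * ln (1 * (1 + - rho N1 N2 * p)).
  apply/funext => p; rewrite /Sfun [1 * (1 + _)]mul1r [- rho _ _ * _]mulNr.
  by rewrite [alpha _ _ * p / _]mulrAC [beta _ _ * p / _]mulrAC; ring.
have xlnx c : 0 < c -> convex_in (fun x => 0 < x < 1 / rho N1 N2)
                                 (fun x => x * ln (c * x)).
  by move=> c0 a b t /andP[a0 _] /andP[b0 _]; apply: convex_in_xlnx.
apply: convex_inD; first apply: convex_inD.
- by apply: convex_inZ; rewrite ?divr_ge0 ?ltW ?tau_gt0 //; apply/xlnx/divr_gt0;
    rewrite ?alpha_gt0 ?tau_gt0.
- by apply: convex_inZ; rewrite ?divr_ge0 ?ltW //; apply/xlnx/divr_gt0;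
    rewrite ?beta_gt0 ?tau_gt0.
- apply: (convex_in_comp_affine (c := 1) (d := - rho N1 N2) (convex_in_xlnx ltr01)).
  by move=> x /andP[_ x1]; rewrite mulNr subr_gt0 -ltr_pdivlMl ?rho_gt0 // mulr1 -div1r.
Qed.

Lemma Hfun_concave {D : R -> Prop} chi : 0 <= chi ->
  convex_in D (fun x => - Hfun N1 N2 chi x).
Proof.
move=> chi0 a b t _ _ /andP[t0 t1].
have t_1t : 0 <= t * (1 - t) by rewrite mulr_ge0 ?subr_ge0.
have := mulr_ge0 (mulr_ge0 (mulr_ge0 chi0 (ltW rho_gt0)) t_1t) (sqr_ge0 (a - b)).
by rewrite /Hfun; lra.
Qed.

End FloryHuggins.

Lemma Fen_decomposition (R : realType) (N1 N2 chi : R) (N : nat) (h : R) (phi : grid R) :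
  Fen N1 N2 chi N h phi = Fc N1 N2 N h phi - Fe N1 N2 chi N h phi.
Proof.
rewrite /Fen /Fc /Fe /FS /FK1 /FK2 /gradnorm2 -gsumZ opprK -!gsumD.
by apply: eq_gsum => i j; ring.
Qed.

Theorem lemma3p2 (R : realType) (L : R) (N : nat) (N1 N2 chi : R) :
  0 < L -> (0 < N)%N -> 0 < N1 -> 0 < N2 -> 0 < chi ->
  let h := L / N%:R in
  (forall phi : grid R, admissible N1 N2 N phi ->
     Fen N1 N2 chi N h phi = Fc N1 N2 N h phi - Fe N1 N2 chi N h phi /\
     Fc N1 N2 N h phi - Fe N1 N2 chi N h phi
       = FS N1 N2 N h phi + FK1 N h phi + FK2 N h phi - FH N1 N2 chi N h phi) /\
  convex_on (admissible N1 N2 N) (Fc N1 N2 N h) /\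
  convex_on (admissible N1 N2 N) (Fe N1 N2 chi N h) /\
  convex_on (admissible N1 N2 N) (FS N1 N2 N h) /\
  convex_on (admissible N1 N2 N) (FK1 N h) /\
  convex_on (admissible N1 N2 N) (FK2 N h) /\
  convex_on (admissible N1 N2 N) (FH N1 N2 chi N h).
Proof.
move=> _ _ N1_gt0 N2_gt0 chi_gt0 h.
have values_admissible phi : admissible N1 N2 N phi ->
  forall i j, 0 < phi i j < 1 / rho N1 N2 by case.
have values_in01 phi : admissible N1 N2 N phi -> forall i j, 0 < phi i j < 1.
  by move=> /values_admissible adm i j; apply: (lt_inv_rho_in01 N1_gt0 N2_gt0).
have cFS : convex_on (admissible N1 N2 N) (FS N1 N2 N h).
  exact (convex_on_gsum_pointwise N h values_admissible
           (Sfun_convex N1_gt0 N2_gt0)).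
have cFe : convex_on (admissible N1 N2 N) (Fe N1 N2 chi N h).
  have -> : Fe N1 N2 chi N h
            = fun phi => gsum N h (fun i j => - Hfun N1 N2 chi (phi i j)).
    by apply/funext => phi; rewrite gsumN.
  exact (convex_on_gsum_pointwise N h values_admissible
           (Hfun_concave (D := fun x => 0 < x < 1 / rho N1 N2)
                         N1_gt0 N2_gt0 (ltW chi_gt0))).
have cFK1 : convex_on (admissible N1 N2 N) (FK1 N h).
  exact (convex_on_gsum_weight_gradsq N h values_in01 (@convex_weight_sqr_kappa R)).
have cFK2 : convex_on (admissible N1 N2 N) (FK2 N h).
  have -> : FK2 N h = fun phi => gsum N h (fun i j => 36^-1 * gradsq h phi i j).
    by apply/funext => phi; rewrite /FK2 /gradnorm2 div1r gsumZ.
  have c36 : (0 : R) < 36 by rewrite ltr0n.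
  exact (convex_on_gsum_weight_gradsq N h values_in01
           (convex_weight_sqr_cst (D := fun x => 0 < x < 1) c36)).
have cFc : convex_on (admissible N1 N2 N) (Fc N1 N2 N h).
  by rewrite /Fc; apply: convex_onD => //; apply: convex_onD.
split; first by move=> phi _; split; [exact: Fen_decomposition | by []].
exact: (conj cFc (conj cFe (conj cFS (conj cFK1 (conj cFK2 cFe))))).
Qed.
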